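(* Let $\alpha: I\to M$ be a unit-speed curve on an oriented surface $M\subset E^3$ with Darboux frame $\{T,V,U\}$ and geodesic torsion $\tau_g$. Let $\phi$ be an antiderivative of $\tau_g$ on $I$ and let $$\gamma(s)=\alpha(s)+\sin(\phi(s))\,V(s)+\cos(\phi(s))\,U(s),$$ and assume $\gamma$ is regular, i.e. $\gamma'(s)\neq 0$ for all $s$. Then $\gamma$ is a general helix if and only if $\alpha$ is a helical curve on $M$.
   Context: $M$ is an oriented surface in Euclidean 3-space $E^3$ and $\alpha:I\to M$ is a unit-speed curve with arc-length parameter $s$. Its Darboux frame $\{T,V,U\}$ consists of the unit tangent $T=\alpha'$, the unit surface normal $U$ of $M$ along $\alpha$, and $V=U\times T$; it satisfies $T'=k_gV+k_nU$, $V'=-k_gT+\tau_gU$, $U'=-k_nT-\tau_gV$, where $k_g,k_n,\tau_g$ are the geodesic curvature, normal curvature and geodesic torsion. A regular curve is a general helix if its unit tangent makes a constant angle with a fixed direction. $\alpha$ is a helical curve on $M$ if $\langle T,d\rangle$ is constant for some fixed unit vector $d$. *)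

From Stdlib Require Import Reals.
From Coquelicot Require Import Coquelicot.
Open Scope R_scope.

Record vec3 := mkv { vx : R; vy : R; vz : R }.

Definition vadd (u v : vec3) : vec3 := mkv (vx u + vx v) (vy u + vy v) (vz u + vz v).
Definition vscal (a : R) (v : vec3) : vec3 := mkv (a * vx v) (a * vy v) (a * vz v).
Definition vzero : vec3 := mkv 0 0 0.
Definition vdot (u v : vec3) : R := vx u * vx v + vy u * vy v + vz u * vz v.
Definition vnorm (v : vec3) : R := sqrt (vdot v v).
Definition vcross (u v : vec3) : vec3 :=
  mkv (vy u * vz v - vz u * vy v)
      (vz u * vx v - vx u * vz v)
      (vx u * vy v - vy u * vx v).

Definition is_vderive (f : R -> vec3) (s : R) (v : vec3) : Prop :=
  is_derive (fun t => vx (f t)) s (vx v) /\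
  is_derive (fun t => vy (f t)) s (vy v) /\
  is_derive (fun t => vz (f t)) s (vz v).

(* The derivative of f at s (meaningful when f is differentiable at s). *)
Definition vderiv (f : R -> vec3) (s : R) : vec3 :=
  mkv (Derive (fun t => vx (f t)) s) (Derive (fun t => vy (f t)) s)
      (Derive (fun t => vz (f t)) s).

Definition in_interval (a b : Rbar) (s : R) : Prop := Rbar_lt a s /\ Rbar_lt s b.

Definition regular_on (a b : Rbar) (g : R -> vec3) : Prop :=
  forall s, in_interval a b s -> exists v, is_vderive g s v /\ v <> vzero.

Definition unit_tangent (g : R -> vec3) (s : R) : vec3 :=
  vscal (/ vnorm (vderiv g s)) (vderiv g s).

Definition general_helix (a b : Rbar) (g : R -> vec3) : Prop :=
  exists d : vec3, vnorm d = 1 /\ exists c : R,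
    forall s, in_interval a b s -> vdot (unit_tangent g s) d = c.

Definition helical_curve (a b : Rbar) (T : R -> vec3) : Prop :=
  exists d : vec3, vnorm d = 1 /\ exists c : R,
    forall s, in_interval a b s -> vdot (T s) d = c.

Definition darboux_frame (a b : Rbar) (alpha T V U : R -> vec3)
    (kg kn taug : R -> R) : Prop :=
  forall s, in_interval a b s ->
    is_vderive alpha s (T s) /\
    vnorm (T s) = 1 /\ vnorm (U s) = 1 /\ vdot (T s) (U s) = 0 /\
    V s = vcross (U s) (T s) /\
    is_vderive T s (vadd (vscal (kg s) (V s)) (vscal (kn s) (U s))) /\
    is_vderive V s (vadd (vscal (- kg s) (T s)) (vscal (taug s) (U s))) /\
    is_vderive U s (vadd (vscal (- kn s) (T s)) (vscal (- taug s) (V s))).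

From Stdlib Require Import Reals Lra Classical.
From Coquelicot Require Import Coquelicot.
Open Scope R_scope.

(* Since phi' = taug, differentiating gamma = alpha + sin(phi) V + cos(phi) U, the
   taug-terms cancel and gamma' = f T with f = 1 - kg sin(phi) - kn cos(phi).
   Regularity makes f nonvanishing, so by continuity and the intermediate value
   theorem f has constant sign e on I. The unit tangent of gamma is then e T, and
   <e T, d> is constant exactly when <T, d> is. *)

Lemma vec3_eq (u v : vec3) :
  vx u = vx v -> vy u = vy v -> vz u = vz v -> u = v.
Proof. destruct u, v; simpl; now intros -> -> ->. Qed.

Lemma vscal_vscal (k l : R) (v : vec3) : vscal k (vscal l v) = vscal (k * l) v.
Proof. apply vec3_eq; simpl; ring. Qed.

Lemma vscal_1 (v : vec3) : vscal 1 v = v.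
Proof. apply vec3_eq; simpl; ring. Qed.

Lemma vdot_scal_l (k : R) (u v : vec3) : vdot (vscal k u) v = k * vdot u v.
Proof. unfold vdot; simpl; ring. Qed.

Lemma vnorm_scal (k : R) (v : vec3) : vnorm (vscal k v) = Rabs k * vnorm v.
Proof.
  unfold vnorm.
  replace (vdot (vscal k v) (vscal k v)) with (Rsqr k * vdot v v)
    by (unfold vdot, Rsqr; simpl; ring).
  rewrite sqrt_mult_alt by apply Rle_0_sqr.
  now rewrite sqrt_Rsqr_abs.
Qed.

Lemma sign_eq_div_Rabs (x : R) : sign x = x / Rabs x.
Proof.
  destruct (Rtotal_order x 0) as [Hx | [-> | Hx]].
  - rewrite sign_eq_m1, Rabs_left by lra. field; lra.
  - rewrite sign_0; unfold Rdiv; ring.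
  - rewrite sign_eq_1, Rabs_right by lra. field; lra.
Qed.

Lemma is_vderive_eq (f : R -> vec3) (s : R) (u v : vec3) :
  is_vderive f s u -> u = v -> is_vderive f s v.
Proof. now intros Hf <-. Qed.

Lemma is_vderive_add (f g : R -> vec3) (s : R) (u v : vec3) :
  is_vderive f s u -> is_vderive g s v ->
  is_vderive (fun t => vadd (f t) (g t)) s (vadd u v).
Proof.
  intros (fx & fy & fz) (gx & gy & gz).
  split; [|split];
    [ apply (is_derive_plus (fun t => vx (f t)) (fun t => vx (g t)))
    | apply (is_derive_plus (fun t => vy (f t)) (fun t => vy (g t)))
    | apply (is_derive_plus (fun t => vz (f t)) (fun t => vz (g t))) ]; assumption.
Qed.

Lemma is_vderive_scal (k : R -> R) (f : R -> vec3) (s k' : R) (v : vec3) :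
  is_derive k s k' -> is_vderive f s v ->
  is_vderive (fun t => vscal (k t) (f t)) s (vadd (vscal k' (f s)) (vscal (k s) v)).
Proof.
  intros Hk (fx & fy & fz).
  split; [|split];
    [ apply (is_derive_mult k (fun t => vx (f t)))
    | apply (is_derive_mult k (fun t => vy (f t)))
    | apply (is_derive_mult k (fun t => vz (f t))) ]; auto using Rmult_comm.
Qed.

Lemma vderiv_is_vderive (f : R -> vec3) (s : R) (v : vec3) :
  is_vderive f s v -> vderiv f s = v.
Proof.
  intros (fx & fy & fz).
  apply vec3_eq; simpl; now apply is_derive_unique.
Qed.

(* No hypothesis [k <> 0]: for [k = 0] both sides are the zero vector. *)
Lemma unit_tangent_scal (g : R -> vec3) (s k : R) (v : vec3) :
  is_vderive g s (vscal k v) -> vnorm v = 1 ->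
  unit_tangent g s = vscal (sign k) v.
Proof.
  intros Hg Hv.
  unfold unit_tangent.
  rewrite (vderiv_is_vderive _ _ _ Hg), vnorm_scal, Hv, Rmult_1_r, vscal_vscal.
  now rewrite sign_eq_div_Rabs, Rmult_comm.
Qed.

Lemma in_interval_between (a b : Rbar) (s1 s2 x : R) :
  in_interval a b s1 -> in_interval a b s2 -> s1 <= x <= s2 -> in_interval a b x.
Proof.
  intros [H1 _] [_ H2] [Hx1 Hx2]. split.
  - now apply (Rbar_lt_le_trans _ s1).
  - now apply (Rbar_le_lt_trans _ s2).
Qed.

Lemma sign_cases (x : R) : x <> 0 -> (x < 0 /\ sign x = -1) \/ (0 < x /\ sign x = 1).
Proof.
  intros Hx. destruct (Rtotal_order x 0) as [H | [H | H]].
  - left. split; [exact H | now apply sign_eq_m1].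
  - contradiction.
  - right. split; [exact H | now apply sign_eq_1].
Qed.

Lemma sign_const_segment (g : R -> R) (s1 s2 : R) :
  s1 <= s2 -> (forall x, s1 <= x <= s2 -> continuity_pt g x /\ g x <> 0) ->
  sign (g s1) = sign (g s2).
Proof.
  intros Hle Hg.
  destruct (Rle_lt_or_eq_dec _ _ Hle) as [Hlt | <-]; [|reflexivity].
  assert (Hzero : forall h : R -> R, (forall x, s1 <= x <= s2 -> continuity_pt h x) ->
            h s1 < 0 -> 0 < h s2 -> exists x, s1 <= x <= s2 /\ h x = 0).
  { intros h Hh H1 H2.
    destruct (Ranalysis5.IVT_interv h s1 s2 Hh Hlt H1 H2) as (x & Hx & Hhx).
    now exists x. }
  assert (G1 : g s1 <> 0) by (apply Hg; lra).
  assert (G2 : g s2 <> 0) by (apply Hg; lra).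
  destruct (sign_cases _ G1) as [[A1 ->] | [A1 ->]];
  destruct (sign_cases _ G2) as [[A2 ->] | [A2 ->]]; try reflexivity; exfalso.
  - destruct (Hzero g) as (x & Hx & Hgx); try lra.
    + intros x Hx. apply Hg, Hx.
    + exact (proj2 (Hg x Hx) Hgx).
  - destruct (Hzero (fun t => - g t)) as (x & Hx & Hgx); try lra.
    + intros x Hx. apply continuity_pt_opp, Hg, Hx.
    + apply (proj2 (Hg x Hx)). lra.
Qed.

Lemma sign_const_on_interval (a b : Rbar) (g : R -> R) :
  (forall s, in_interval a b s -> continuity_pt g s /\ g s <> 0) ->
  forall s1 s2, in_interval a b s1 -> in_interval a b s2 -> sign (g s1) = sign (g s2).
Proof.
  intros Hg.
  assert (Hle : forall s1 s2, s1 <= s2 -> in_interval a b s1 -> in_interval a b s2 ->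
            sign (g s1) = sign (g s2)).
  { intros s1 s2 Hle H1 H2. apply sign_const_segment; [exact Hle|].
    intros x Hx. apply Hg, (in_interval_between a b s1 s2); assumption. }
  intros s1 s2 H1 H2. destruct (Rle_or_lt s1 s2).
  - now apply Hle.
  - symmetry. apply Hle; [lra | assumption | assumption].
Qed.

Lemma is_vderive_nonzero_scal (g : R -> vec3) (s k : R) (w : vec3) :
  (exists v, is_vderive g s v /\ v <> vzero) -> is_vderive g s (vscal k w) -> k <> 0.
Proof.
  intros (v & Hv & Hv0) Hk ->. apply Hv0.
  rewrite <- (vderiv_is_vderive _ _ _ Hv), (vderiv_is_vderive _ _ _ Hk).
  apply vec3_eq; simpl; ring.
Qed.

Lemma helical_curve_scal_const (a b : Rbar) (W T : R -> vec3) (e : R -> R) :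
  (forall s1 s2, in_interval a b s1 -> in_interval a b s2 -> e s1 = e s2) ->
  (forall s, in_interval a b s -> W s = vscal (e s) (T s)) ->
  helical_curve a b T -> helical_curve a b W.
Proof.
  intros He HW (d & Hd & c & Hc). exists d. split; [exact Hd|].
  destruct (classic (exists s0, in_interval a b s0)) as [[s0 Hs0] | Hempty].
  - exists (e s0 * c). intros s Hs.
    now rewrite HW, vdot_scal_l, Hc, (He s s0).
  - exists 0. intros s Hs. exfalso. now apply Hempty; exists s.
Qed.

Lemma helical_curve_rescale (a b : Rbar) (W T : R -> vec3) (e : R -> R) :
  (forall s, in_interval a b s -> e s <> 0) ->
  (forall s1 s2, in_interval a b s1 -> in_interval a b s2 -> e s1 = e s2) ->
  (forall s, in_interval a b s -> W s = vscal (e s) (T s)) ->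
  helical_curve a b W <-> helical_curve a b T.
Proof.
  intros He0 He HW. split.
  - apply (helical_curve_scal_const a b T W (fun s => / e s)).
    + intros s1 s2 H1 H2. now rewrite (He s1 s2).
    + intros s Hs. now rewrite HW, vscal_vscal, Rinv_l, vscal_1 by auto.
  - now apply helical_curve_scal_const with e.
Qed.

Definition darboux_offset (alpha V U : R -> vec3) (phi : R -> R) (s : R) : vec3 :=
  vadd (alpha s) (vadd (vscal (sin (phi s)) (V s)) (vscal (cos (phi s)) (U s))).

Definition offset_speed (kg kn phi : R -> R) (s : R) : R :=
  1 - kg s * sin (phi s) - kn s * cos (phi s).

Lemma darboux_offset_derive (a b : Rbar) (alpha T V U : R -> vec3)
    (kg kn taug phi : R -> R) (s : R) :
  darboux_frame a b alpha T V U kg kn taug -> in_interval a b s ->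
  is_derive phi s (taug s) ->
  is_vderive (darboux_offset alpha V U phi) s (vscal (offset_speed kg kn phi s) (T s)).
Proof.
  intros HD Hs Hphi.
  destruct (HD s Hs) as (Halpha & _ & _ & _ & _ & _ & HV & HU).
  eapply is_vderive_eq.
  - apply is_vderive_add; [exact Halpha|].
    apply is_vderive_add; apply is_vderive_scal; try eassumption.
    + exact (is_derive_comp sin phi s _ _ (is_derive_sin _) Hphi).
    + exact (is_derive_comp cos phi s _ _ (is_derive_cos _) Hphi).
  - unfold offset_speed. apply vec3_eq; simpl; unfold scal; simpl; unfold mult; simpl; ring.
Qed.

Lemma offset_speed_continuous (kg kn phi : R -> R) (s : R) :
  continuous kg s -> continuous kn s -> ex_derive phi s ->
  continuity_pt (offset_speed kg kn phi) s.
Proof.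
  intros Hkg Hkn Hphi. apply continuity_pt_filterlim.
  assert (Hphi_c : continuous phi s)
    by exact (ex_derive_continuous (K := R_AbsRing) (V := R_NormedModule) phi s Hphi).
  apply (continuous_minus (fun t => 1 - kg t * sin (phi t)) (fun t => kn t * cos (phi t))).
  - apply (continuous_minus (fun _ => 1) (fun t => kg t * sin (phi t))).
    + apply continuous_const.
    + apply (continuous_mult kg (fun t => sin (phi t))); auto using continuous_sin_comp.
  - apply (continuous_mult kn (fun t => cos (phi t))); auto using continuous_cos_comp.
Qed.

Theorem theorem3p3 (a b : Rbar) (alpha T V U : R -> vec3) (kg kn taug phi : R -> R) :
  darboux_frame a b alpha T V U kg kn taug ->
  (forall s, in_interval a b s -> continuous kg s /\ continuous kn s /\ continuous taug s) ->
  (forall s, in_interval a b s -> is_derive phi s (taug s)) ->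
  regular_on a b (fun s => vadd (alpha s)
                     (vadd (vscal (sin (phi s)) (V s)) (vscal (cos (phi s)) (U s)))) ->
  (general_helix a b (fun s => vadd (alpha s)
                     (vadd (vscal (sin (phi s)) (V s)) (vscal (cos (phi s)) (U s))))
   <-> helical_curve a b T).
Proof.
  intros HD HC HP Hreg.
  fold (darboux_offset alpha V U phi) in Hreg |- *.
  set (f := offset_speed kg kn phi).
  assert (Hder : forall s, in_interval a b s ->
            is_vderive (darboux_offset alpha V U phi) s (vscal (f s) (T s)))
    by (intros s Hs; exact (darboux_offset_derive _ _ _ _ _ _ _ _ _ _ _ HD Hs (HP s Hs))).
  assert (Hf : forall s, in_interval a b s -> continuity_pt f s /\ f s <> 0).
  { intros s Hs. destruct (HC s Hs) as (Hkg & Hkn & _). split.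
    - apply offset_speed_continuous; [assumption | assumption | exists (taug s); auto].
    - exact (is_vderive_nonzero_scal _ _ _ _ (Hreg s Hs) (Hder s Hs)). }
  (* [general_helix a b g] unfolds to [helical_curve a b (unit_tangent g)]. *)
  apply (helical_curve_rescale a b _ T (fun s => sign (f s))).
  - intros s Hs. apply sign_neq_0, Hf, Hs.
  - apply sign_const_on_interval, Hf.
  - intros s Hs. apply unit_tangent_scal; [apply Hder, Hs | apply (HD s Hs)].
Qed.
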